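(* Let $M$ be a $3$-connected simple matroid with a $3$-connected simple minor $N$, and suppose $r(M)\ge 4$. If $X$ is the hull of an $N$-carambole of $M$, then $X$ is an independent set of $M$ and every element of $X$ is $N$-contractible in $M$.
   Context: An element $x$ is $N$-contractible in $M$ if $M/x$ is a $3$-connected matroid with an $N$-minor; a set $Y$ is vertically $N$-contractible if $\mathrm{si}(M/Y)$ (the simplification) is a $3$-connected matroid with an $N$-minor. A line is a rank-$2$ set. For $n\ge3$, a sequence $x_1,\dots,x_n,y_1,\dots,y_n$ of elements of $M$ is an $N$-carambole of $M$ if $L:=\{y_1,\dots,y_n\}$ is a vertically $N$-contractible line of $M$ with $n$ distinct elements and, for each $i$, $(L-y_i)\cup x_i$ is a cocircuit of $M$; $X:=\{x_1,\dots,x_n\}$ is its hull. *)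

From mathcomp Require Import all_boot.
Set Implicit Arguments. Unset Strict Implicit. Unset Printing Implicit Defensive.

(* Minors of a matroid on T are again pre-matroids on T (with smaller ground set). *)
Record pmat (T : finType) := PMat { gr : {set T}; rk : {set T} -> nat }.

Section Matroids.
Variable T : finType.
Implicit Types (M : pmat T) (X Y C D : {set T}).

(* rank axioms (R1)-(R3); the rank of a set only depends on its part in E *)
Definition is_matroid M : Prop :=
  [/\ forall X, rk M X = rk M (X :&: gr M),
      forall X, rk M X <= #|X|,
      forall X Y, X \subset Y -> rk M X <= rk M Y
    & forall X Y, rk M (X :|: Y) + rk M (X :&: Y) <= rk M X + rk M Y].

Definition indep M X : Prop := X \subset gr M /\ rk M X = #|X|.

Definition delete M D : pmat T :=
  PMat (gr M :\: D) (fun X => rk M (X :&: (gr M :\: D))).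

Definition contract M C : pmat T :=
  PMat (gr M :\: C)
       (fun X => rk M ((X :&: (gr M :\: C)) :|: (C :&: gr M)) - rk M (C :&: gr M)).

Definition dual M : pmat T :=
  PMat (gr M)
       (fun X => #|X :&: gr M| + rk M (gr M :\: X) - rk M (gr M)).

Definition circuit M C : Prop :=
  [/\ C \subset gr M, rk M C < #|C|
    & forall D, D \proper C -> rk M D = #|D|].

Definition cocircuit M C : Prop := circuit (dual M) C.

(* simple: no loops and no parallel pairs *)
Definition simple M : Prop :=
  forall e f, e \in gr M -> f \in gr M -> rk M [set e; f] = #|[set e; f]|.

Definition lambda M X : nat :=
  rk M (X :&: gr M) + rk M (gr M :\: X) - rk M (gr M).

Definition separation M (k : nat) X : Prop :=
  [/\ X \subset gr M, k <= #|X|, k <= #|gr M :\: X| & lambda M X < k].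

Definition three_connected M : Prop :=
  forall k X, 0 < k < 3 -> ~ separation M k X.

(* canonical simplification: delete loops, and in each parallel class keep
   only the element of least [enum_rank]. *)
Definition si_keep M : {set T} :=
  [set e in gr M | (rk M [set e] == 1) &&
     [forall f, ((f \in gr M) && (rk M [set e; f] == 1)) ==>
                (enum_rank e <= enum_rank f)]].

Definition si M : pmat T := delete M (gr M :\: si_keep M).

End Matroids.

Definition isomorphic (T T' : finType) (N : pmat T') (M' : pmat T) : Prop :=
  exists f : T' -> T,
    [/\ {in gr N &, injective f}, f @: gr N = gr M'
      & forall X : {set T'}, X \subset gr N -> rk N X = rk M' (f @: X)].

Definition has_minor (T T' : finType) (M : pmat T) (N : pmat T') : Prop :=
  exists C D : {set T},
    [/\ C \subset gr M, D \subset gr M, [disjoint C & D]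
      & isomorphic N (delete (contract M C) D)].

Definition N_contractible (T T' : finType) (M : pmat T) (N : pmat T') (x : T) : Prop :=
  three_connected (contract M [set x]) /\ has_minor (contract M [set x]) N.

Definition vert_N_contractible (T T' : finType) (M : pmat T) (N : pmat T')
    (Y : {set T}) : Prop :=
  three_connected (si (contract M Y)) /\ has_minor (si (contract M Y)) N.

Definition carambole (T T' : finType) (M : pmat T) (N : pmat T') (n : nat)
    (x y : 'I_n -> T) : Prop :=
  let L := [set y i | i : 'I_n] in
  [/\ 3 <= n,
      (forall i, x i \in gr M /\ y i \in gr M) /\ injective y,
      rk M L = 2,
      vert_N_contractible M N L
    & forall i, cocircuit M ((L :\ y i) :|: [set x i])].

Definition hull (T : finType) (n : nat) (x : 'I_n -> T) : {set T} :=
  [set x i | i : 'I_n].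

From mathcomp Require Import all_boot zify.
Set Implicit Arguments. Unset Strict Implicit. Unset Printing Implicit Defensive.

(* Write L for the line {y_i}, C_i = (L - y_i) + x_i for the cocircuits and
   H_i = E - C_i for the complementary hyperplanes.  Three-connectivity forces
   x_i outside L and r(E - L) = r(M); as E - L - x_i lies in H_i, every x_i is a
   coloop of M|(E - L), so the hull is independent.

   A 1- or 2-separation (S, S') of M/x_i lifts to one of M unless x_i is spanned
   by both sides.  Then one side meets L twice, hence spans L, and the other side
   has at most one element z off L; so x_i would be spanned by L + z, which the
   triangles {y_j, z, x_i} (j <> i), each inside the hyperplane H_j, rule out.

   Finally, in M/x_i the further contraction of y_i spans all of L again, so
   (M/x_i)/y_i, with x_i renamed y_j, agrees with M/L on E - L: every minor of
   si(M/L) is a minor of M/x_i. *)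

Lemma setDDK (T : finType) (A B : {set T}) : B \subset A -> A :\: (A :\: B) = B.
Proof. by move=> sBA; rewrite setDDr setDv set0U; apply/setIidPr. Qed.

Lemma two_other_ords n (i : 'I_n) : 2 < n ->
  exists j1 j2 : 'I_n, [/\ j1 != i, j2 != i & j1 != j2].
Proof.
move=> n2; have n0 : 0 < n by lia. have n1 : 1 < n by lia.
set a := Ordinal n0; set b := Ordinal n1; set c := Ordinal n2.
case: (eqVneq i a) => [->|ia]; first by exists b, c.
case: (eqVneq i b) => [->|ib]; first by exists a, c.
by exists a, b; rewrite !(eq_sym _ i).
Qed.

Section Minors.
Variables (T : finType) (M : pmat T).
Implicit Types (C D Y Z : {set T}).

Lemma rk_delete D Z : Z \subset gr M :\: D -> rk (delete M D) Z = rk M Z.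
Proof. by move=> sZ; rewrite /= (setIidPl sZ). Qed.

Lemma rk_contract C Z : C \subset gr M -> Z \subset gr M :\: C ->
  rk (contract M C) Z = rk M (Z :|: C) - rk M C.
Proof. by move=> sC sZ; rewrite /= (setIidPl sZ) (setIidPl sC). Qed.

End Minors.

Lemma has_minor_of_embedding (T T' : finType) (M Q : pmat T) (N : pmat T') (C : {set T}) (g : T -> T) :
  isomorphic N Q -> C \subset gr M -> {in gr Q &, injective g} ->
  g @: gr Q \subset gr M :\: C ->
  (forall Y : {set T}, Y \subset gr Q -> rk Q Y = rk M (g @: Y :|: C) - rk M C) ->
  has_minor M N.
Proof.
move=> [f [finj fim frk]] sC ginj sgQ hrk.
set D := (gr M :\: C) :\: g @: gr Q.
have grD : gr (delete (contract M C) D) = g @: gr Q by rewrite /= setDDK.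
exists C, D; split => //.
- exact: subset_trans (subsetDl _ _) (subsetDl _ _).
- by rewrite disjoint_sym disjoints_subset; apply/subsetP => w; rewrite !inE => /and3P [].
exists (g \o f); split.
- move=> a b aN bN /= gab; apply: finj => //.
  by apply: ginj gab; rewrite -fim imset_f.
- by rewrite imset_comp fim grD.
move=> X sX; have sfX : f @: X \subset gr Q by rewrite -fim imsetS.
have sgfX : g @: (f @: X) \subset g @: gr Q := imsetS g sfX.
rewrite frk // hrk // imset_comp rk_delete ?rk_contract //; last by move: sgfX; rewrite -grD.
exact: subset_trans sgfX sgQ.
Qed.

Section Rank.
Variables (T : finType) (M : pmat T).
Hypothesis hM : is_matroid M.
Implicit Types (X Y W S C : {set T}).
Local Notation r := (rk M).
Local Notation E := (gr M).

Lemma rk_le_card X : r X <= #|X|. Proof. by case: hM. Qed.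
Lemma rk_mono X Y : X \subset Y -> r X <= r Y. Proof. by case: hM => _ _ + _; apply. Qed.
Lemma rk_submod X Y : r (X :|: Y) + r (X :&: Y) <= r X + r Y. Proof. by case: hM. Qed.

Lemma rk_submodW X Y W : W \subset X :&: Y -> r (X :|: Y) + r W <= r X + r Y.
Proof. by move=> sW; apply: leq_trans (rk_submod X Y); rewrite leq_add2l rk_mono. Qed.

Lemma rk_setU1 X e : r (e |: X) <= r X + 1.
Proof.
have := rk_submod [set e] X; have := rk_le_card [set e]; rewrite cards1; lia.
Qed.

Lemma rk_setU1_le_mono e S X : S \subset X -> r (e |: S) <= r S -> r (e |: X) <= r X.
Proof.
move=> sSX clS; have := rk_submodW (X := e |: S) (Y := X) (W := S).
rewrite subsetI subsetU1 sSX -setUA (setUidPr sSX) => /(_ isT); lia.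
Qed.

Lemma rk_setU_le_common k X Y W : r X <= k -> r Y <= k -> W \subset X :&: Y -> k <= r W ->
  r (X :|: Y) <= k.
Proof. move=> rX rY /rk_submodW; lia. Qed.

Lemma rk_of_coloops X : (forall e, e \in X -> r (X :\ e) < r X) -> r X = #|X|.
Proof.
move: {2}#|X| (erefl #|X|) => k; elim: k X => [|k IH] X cX coX.
  by apply/eqP; rewrite eqn_leq rk_le_card cX.
have /card_gt0P [e eX] : 0 < #|X| by rewrite cX.
have cXe : #|X :\ e| = k by move: (cardsD1 e X); rewrite eX cX; lia.
have rXe : r (X :\ e) = k.
  rewrite -cXe; apply: IH => // f; rewrite in_setD1 => /andP [fe fX].
  rewrite ltnNge; apply: contraTN (coX f fX); rewrite -leqNgt => clf.
  have := rk_setU1_le_mono (e := f) (S := X :\ e :\ f) (X := X :\ f).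
  by rewrite setSD ?subsetDl // !setD1K ?inE ?fe // => /(_ isT clf).
have := coX e eX; have := rk_setU1 (X :\ e) e; rewrite setD1K //; lia.
Qed.

Lemma cocircuit_rk C : cocircuit M C ->
  [/\ C \subset E, r (E :\: C) < r E & forall e, e \in C -> r (e |: (E :\: C)) = r E].
Proof.
rewrite /cocircuit /circuit /= => -[sC ltC minC]; rewrite (setIidPl sC) in ltC.
split => // [|e eC]; first lia.
have sCe : C :\ e \subset E := subset_trans (subsetDl _ _) sC.
have sub : E :\: (C :\ e) \subset e |: (E :\: C).
  by apply/subsetP => w; rewrite !inE; case: (w == e).
have sE : e |: (E :\: C) \subset E by rewrite subUset sub1set (subsetP sC) ?subsetDl.
apply/eqP; rewrite eqn_leq rk_mono //=; apply: leq_trans (rk_mono sub).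
have [/cards0_eq -> | pos] := posnP #|C :\ e|; first by rewrite setD0.
have := minC _ (properD1 eC); rewrite /= (setIidPl sCe); lia.
Qed.

Lemma three_connected_rk X Y : three_connected M -> X \subset E -> E :\: X \subset Y ->
  2 <= #|X| -> 2 <= #|E :\: X| -> r E + 2 <= r X + r Y.
Proof.
move=> h3 sX sY cX cX'.
have : ~~ (lambda M X < 2) by apply/negP => hl; apply: (h3 2 X) => //; split.
rewrite /lambda (setIidPl sX) -leqNgt; have := rk_mono sY; lia.
Qed.

Section ContractPoint.
Variable e : T.
Hypotheses (h3 : three_connected M) (eE : e \in E) (re : r [set e] = 1).

Lemma lambda_contract1 X : X \subset E :\ e ->
  lambda (contract M [set e]) X = r (e |: X) + r (e |: ((E :\ e) :\: X)) - r E - 1.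
Proof.
move=> sX; have se : [set e] \subset E by rewrite sub1set.
rewrite /lambda; have -> : gr (contract M [set e]) = E :\ e by [].
rewrite (setIidPl sX) !rk_contract ?subsetDl // !(setUC _ [set e]) setD1K // re.
have := rk_mono se; have := rk_mono (subsetUl [set e] X).
have := rk_mono (subsetUl [set e] ((E :\ e) :\: X)); lia.
Qed.

Lemma three_connected_rk_contract1 S : S \subset E :\ e -> 2 <= #|S| ->
  0 < #|(E :\ e) :\: S| -> r E + 2 <= r S + r (e |: ((E :\ e) :\: S)).
Proof.
move=> sS cS /card_gt0P [w wS'].
apply: three_connected_rk => //; first exact: subset_trans sS (subsetDl _ _).
  by apply/subsetP => v; rewrite !inE; case: (v == e).
apply/card_gt1P; exists e, w; move: wS' (subsetP sS e); rewrite !inE eqxx eE /=.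
move=> /and3P [-> we ->] eS; rewrite eq_sym we andbT; split => //.
by apply/negP => /eS.
Qed.

Lemma contract1_no_1separation X : 4 <= #|E| -> ~ separation (contract M [set e]) 1 X.
Proof.
move=> cE [/= sX cX cX' hl]; rewrite lambda_contract1 // in hl.
have sS' : (E :\ e) :\: X \subset E :\ e := subsetDl _ _.
have cXS : #|X| + #|(E :\ e) :\: X| = #|E :\ e|.
  by rewrite -(cardsID X (E :\ e)) (setIidPr sX).
have := cardsD1 e E; rewrite eE.
case: (leqP 2 #|X|) => [cX2|cX1] cE1.
  have := three_connected_rk_contract1 sX cX2 cX'.
  have := rk_mono (subsetU1 e X); lia.
have := three_connected_rk_contract1 sS'; rewrite setDDK // => /(_ _ cX).
have := rk_mono (subsetU1 e ((E :\ e) :\: X)); lia.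
Qed.

Lemma contract1_2separation_rk X : separation (contract M [set e]) 2 X ->
  [/\ r (e |: X) <= r X, r (e |: ((E :\ e) :\: X)) <= r ((E :\ e) :\: X)
    & r X + r ((E :\ e) :\: X) <= r E + 2].
Proof.
move=> [/= sX cX cX' hl]; rewrite lambda_contract1 // in hl.
have sS' : (E :\ e) :\: X \subset E :\ e := subsetDl _ _.
have := three_connected_rk_contract1 sX cX (ltnW cX').
have := three_connected_rk_contract1 sS'; rewrite setDDK // => /(_ cX' (ltnW cX)).
have := rk_mono (subsetU1 e X); have := rk_mono (subsetU1 e ((E :\ e) :\: X)).
by split; lia.
Qed.

End ContractPoint.

End Rank.

Section Carambole.
Variables (T : finType) (M : pmat T) (n : nat) (x y : 'I_n -> T).
Local Notation r := (rk M).
Local Notation E := (gr M).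
Local Notation L := [set y i | i : 'I_n].
Local Notation A := (E :\: L).
Local Notation C i := ((L :\ y i) :|: [set x i]).
Local Notation H i := (E :\: C i).
Hypotheses (hM : is_matroid M) (h3 : three_connected M) (hs : simple M)
  (hr4 : 4 <= r E) (hn : 3 <= n) (hxE : forall i, x i \in E) (hyE : forall i, y i \in E)
  (hyi : injective y) (hL2 : r L = 2) (hcoc : forall i, cocircuit M (C i)).
Implicit Types (i j : 'I_n) (B S U W Y Z : {set T}).

Lemma mem_line i : y i \in L. Proof. exact: imset_f. Qed.
Lemma line_sub : L \subset E. Proof. by apply/subsetP => _ /imsetP [i _ ->]. Qed.
Lemma card_line : #|L| = n. Proof. by rewrite card_imset // card_ord. Qed.

Lemma rk_point e : e \in E -> r [set e] = 1.
Proof. by move=> eE; have := hs eE eE; rewrite setUid cards1. Qed.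

Lemma rk_pair e f : e \in E -> f \in E -> e != f -> r [set e; f] = 2.
Proof. by move=> eE fE ef; rewrite (hs eE fE) cards2 ef. Qed.

Lemma rk_setU_line B : 2 <= #|B :&: L| -> r (B :|: L) = r B.
Proof.
case/card_gt1P => e [f [eBL fBL ef]].
have inE' w : w \in B :&: L -> w \in E by rewrite inE => /andP [_ /(subsetP line_sub)].
have : [set e; f] \subset B :&: L by rewrite subUset !sub1set eBL fBL.
move/(rk_submodW hM); rewrite hL2 rk_pair ?inE' //.
have := rk_mono hM (subsetUl B L); lia.
Qed.

Lemma setU1_line j W : y j |: (W :|: L) = W :|: L.
Proof. by rewrite setUCA (setUidPr (_ : [set y j] \subset L)) // sub1set mem_line. Qed.

Lemma rk_setU1_hyper i S e : S \subset H i -> e \in C i -> r (e |: S) = r S + 1.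
Proof.
have [_ ltH clH] := cocircuit_rk hM (hcoc i) => sS eC.
have := rk_setU1_le_mono hM (e := e) sS; rewrite clH //.
have := rk_setU1 hM S e; lia.
Qed.

Lemma mem_C_x i : x i \in C i. Proof. by rewrite !inE eqxx orbT. Qed.
Lemma mem_C_y i j : j != i -> y j \in C i.
Proof. by move=> ji; rewrite !inE mem_line (inj_eq hyi) ji. Qed.

Lemma rk_hyper_ge i : r E <= r (H i) + 1.
Proof.
have [_ _ clH] := cocircuit_rk hM (hcoc i).
by rewrite -(clH _ (mem_C_x i)) rk_setU1.
Qed.

Lemma notin_line_x i : x i \notin L.
Proof.
apply/negP => xL; have [sC ltH _] := cocircuit_rk hM (hcoc i).
have sCL : C i \subset L by rewrite subUset subD1set sub1set xL.
have cC : 2 <= #|C i|.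
  apply: leq_trans (subset_leq_card (subsetUl _ _)).
  by have := cardsD1 (y i) L; rewrite mem_line card_line; lia.
have cH : 2 <= #|H i| by have := rk_le_card hM (H i); have := rk_hyper_ge i; lia.
have := three_connected_rk hM h3 sC (subxx _) cC cH.
have := rk_mono hM sCL; lia.
Qed.

Lemma mem_A_x i : x i \in A. Proof. by rewrite inE notin_line_x hxE. Qed.

Lemma rk_A : r A = r E.
Proof.
have cA : 2 <= #|A|.
  have := rk_submod hM L A; have := rk_le_card hM A.
  have sEA : E \subset L :|: A by apply/subsetP => w wE; rewrite !inE wE andbT orbN.
  have := rk_mono hM sEA; lia.
have := three_connected_rk hM h3 line_sub (subxx _); rewrite card_line => /(_ (ltnW hn) cA).
have := rk_mono hM (subsetDl E L); lia.
Qed.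

Lemma mem_hyper_A i z : z \in A -> z != x i -> z \in H i.
Proof. by rewrite !inE => /andP [zL ->] zx; rewrite (negbTE zL) (negbTE zx) andbF. Qed.

Lemma sub_A_hyper i : A :\ x i \subset H i.
Proof. by apply/subsetP => z; rewrite in_setD1 => /andP [zx zA]; apply: mem_hyper_A. Qed.

Lemma rk_setU1_x i Y : Y \subset A :\ x i -> r (x i |: Y) = r Y + 1.
Proof. by move=> sY; apply: rk_setU1_hyper (subset_trans sY (sub_A_hyper i)) (mem_C_x i). Qed.

Lemma rk_A_x i : r (A :\ x i) = r E - 1.
Proof. by have := rk_setU1_x (subxx (A :\ x i)); rewrite setD1K ?mem_A_x // rk_A; lia. Qed.

Lemma line_neq_x i j : y j != x i.
Proof. by apply: contraNneq _ (notin_line_x i) => <-; apply: mem_line. Qed.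

Lemma mem_hyper_y i : y i \in H i.
Proof. by rewrite !inE eqxx hyE (negbTE (line_neq_x i i)). Qed.

Lemma x_inj i j : i != j -> x i != x j.
Proof.
move=> ij; apply/eqP => xij.
have [_ ltH _] := cocircuit_rk hM (hcoc i).
have sH : y i |: (A :\ x i) \subset H i by rewrite subUset sub1set mem_hyper_y sub_A_hyper.
have := rk_setU1_hyper (sub_A_hyper j) (mem_C_y ij); rewrite -xij rk_A_x.
have := rk_mono hM sH; lia.
Qed.

Lemma indep_hull : indep M (hull x).
Proof.
have sXA : hull x \subset A by apply/subsetP => _ /imsetP [i _ ->]; apply: mem_A_x.
split; first exact: subset_trans sXA (subsetDl _ _).
apply: (rk_of_coloops hM) => _ /imsetP [i _ ->].
have := rk_setU1_x (setSD [set x i] sXA); rewrite setD1K ?imset_f //; lia.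
Qed.

Lemma rk_triangle i j z : j != i -> z \in A -> z != x j -> r (x i |: (z |: L)) <= 3 ->
  r [set y j; z; x i] <= 2.
Proof.
move=> ji zA zxj rP; have ij : i != j by rewrite eq_sym.
have sT : [set y j; z; x i] \subset H j.
  by rewrite !subUset !sub1set mem_hyper_y !mem_hyper_A ?mem_A_x ?x_inj.
have : y i |: [set y j; z; x i] \subset x i |: (z |: L).
  by rewrite !subUset !sub1set !inE !mem_line !eqxx !orbT.
move/(rk_mono hM); rewrite (rk_setU1_hyper sT (mem_C_y ij)); lia.
Qed.

Lemma three_connected_rk_point_line i z : z \in A :\ x i ->
  r E + 2 <= r (x i |: (z |: L)) + r (A :\ x i :\ z).
Proof.
move=> zAx; have /setD1P [_ zA] := zAx.
have rAxz : r E - 2 <= r (A :\ x i :\ z).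
  by have := rk_setU1 hM (A :\ x i :\ z) z; rewrite setD1K // rk_A_x; lia.
apply: three_connected_rk => //.
- by rewrite !subUset !sub1set hxE (subsetP (subsetDl E L)) ?line_sub.
- by apply/subsetP => w; rewrite !inE; case: (w == x i); case: (w == z); rewrite ?andbF.
- apply: leq_trans (subset_leq_card (_ : L \subset _)); first by rewrite card_line; lia.
  by apply/subsetP => w wL; rewrite !inE wL !orbT.
have : A :\ x i :\ z \subset E :\: (x i |: (z |: L)).
  by apply/subsetP => w; rewrite !inE => /and4P [/negbTE -> /negbTE -> /negbTE -> ->].
by move/subset_leq_card; have := rk_le_card hM (A :\ x i :\ z); lia.
Qed.

(* Otherwise every triangle [y j; z; x i] with j <> i is dependent, since y i is
   outside the hyperplane H j containing it, and L collapses onto the line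
   through z and x i. *)
Lemma rk_point_line_lt_x i z : z \in A :\ x i -> r (z |: L) < r (x i |: (z |: L)).
Proof.
move=> zAx; have /setD1P [zx zA] := zAx; rewrite ltnNge; apply/negP => clP.
have rP : r (x i |: (z |: L)) <= 3 by have := rk_setU1 hM L z; lia.
have sep := three_connected_rk_point_line zAx.
have := rk_mono hM (subsetDl (A :\ x i) [set z]); rewrite rk_A_x => rAxz.
have zxj j : z != x j.
  have [-> // | ji] := eqVneq j i; apply/eqP => zj.
  have := rk_setU1_x (i := j) (Y := A :\ x i :\ z); rewrite -zj setD1K // rk_A_x.
  by move=> /(_ (setSD _ (subsetDl _ _))); lia.
have [j1 [j2 [j1i j2i j12]]] := two_other_ords i hn.
have rT : r ([set y j1; z; x i] :|: [set y j2; z; x i]) <= 2.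
  apply: (rk_setU_le_common hM (W := [set z; x i])); rewrite ?rk_triangle //.
    by rewrite subsetI !subUset !sub1set !inE !eqxx !orbT.
  by rewrite rk_pair ?hxE // (subsetP (subsetDl E L)).
have rLT : r (L :|: ([set y j1; z; x i] :|: [set y j2; z; x i])) <= 2.
  apply: (rk_setU_le_common hM (W := [set y j1; y j2])); rewrite ?hL2 //.
    by rewrite subsetI !subUset !sub1set !inE !mem_line !eqxx !orbT.
  by rewrite rk_pair ?(inj_eq hyi).
have : x i |: (z |: L) \subset L :|: ([set y j1; z; x i] :|: [set y j2; z; x i]).
  by rewrite !subUset !sub1set !inE !eqxx !orbT subsetUl.
move/(rk_mono hM); lia.
Qed.

Lemma rk_small_line_lt_x i Z : Z \subset A :\ x i -> #|Z| <= 1 ->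
  r (Z :|: L) < r (x i |: (Z :|: L)).
Proof.
move=> sZ; rewrite leq_eqVlt ltnS leqn0 => /orP [/cards1P [z Zz] | /eqP/cards0_eq Z0].
  by rewrite Zz; apply: rk_point_line_lt_x; apply: (subsetP sZ); rewrite Zz set11.
have [j [_ [ji _ _]]] := two_other_ords i hn.
have xjA : x j \in A :\ x i by rewrite in_setD1 x_inj // mem_A_x.
rewrite Z0 set0U ltnNge; apply/negP => /(rk_setU1_le_mono hM (subsetUr [set x j] L)).
have := rk_point_line_lt_x xjA; lia.
Qed.

Lemma contract_x_2separation_line_side_false i S : S \subset E :\ x i ->
  r (x i |: S) <= r S -> r (x i |: ((E :\ x i) :\: S)) <= r ((E :\ x i) :\: S) ->
  r S + r ((E :\ x i) :\: S) <= r E + 2 -> 2 <= #|S :&: L| -> False.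
Proof.
move=> sS clS clS' rS cSL.
have sZ : (E :\ x i) :\: S :\: L \subset A :\ x i.
  by apply/subsetP => w; rewrite !inE => /and4P [-> _ -> ->].
have sZE : (E :\ x i) :\: S :\: L \subset E.
  by apply: subset_trans sZ (subset_trans (subsetDl _ _) (subsetDl _ _)).
have clSL : r (x i |: (S :|: L)) <= r S.
  by rewrite -(rk_setU_line cSL); exact: (rk_setU1_le_mono hM (subsetUl S L) clS).
have rZ := rk_setU1_x sZ.
have := rk_mono hM (setUS [set x i] (subsetDl ((E :\ x i) :\: S) L)) => rZS.
have cZ : #|(E :\ x i) :\: S :\: L| <= 1.
  rewrite leqNgt; apply/negP => cZ.
  have := three_connected_rk hM h3 (Y := x i |: (S :|: L)) sZE.
  have sub : E :\: ((E :\ x i) :\: S :\: L) \subset x i |: (S :|: L).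
    apply/subsetP => w; rewrite !inE.
    by case: (w \in E); case: (w == x i); case: (w \in S); case: (w \in L).
  have cE : 2 <= #|E :\: ((E :\ x i) :\: S :\: L)|.
    apply: leq_trans (subset_leq_card (_ : L \subset _)); first by rewrite card_line; lia.
    by apply/subsetP => w wL; rewrite !inE wL (subsetP line_sub).
  move=> /(_ sub cZ cE); lia.
have := rk_small_line_lt_x sZ cZ.
have : (E :\ x i) :\: S \subset (E :\ x i) :\: S :\: L :|: L.
  by apply/subsetP => w; rewrite !inE; case: (w \in L); rewrite ?orbT ?orbF.
move/(rk_setU1_le_mono hM)/(_ clS'); lia.
Qed.

Lemma card_line_split i S : S \subset E :\ x i ->
  #|S :&: L| + #|((E :\ x i) :\: S) :&: L| = n.
Proof.
move=> sS; transitivity #|L|; last exact: card_line.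
rewrite -(cardsID S L) setIC; congr (_ + _); apply: eq_card => w.
rewrite !inE; case wL: (w \in L); rewrite ?andbF ?andbT //= (subsetP line_sub) //.
have wx : w != x i by apply: contraNneq _ (notin_line_x i) => <-.
by rewrite wx !andbT.
Qed.

Lemma contract_x_three_connected i : three_connected (contract M [set x i]).
Proof.
have rx := rk_point (hxE i).
move=> k X /andP [k0 k3]; have [-> | ->] : k = 1 \/ k = 2 by lia.
  apply: (contract1_no_1separation hM h3 (hxE i) rx).
  by apply: leq_trans hr4 (rk_le_card hM E).
move=> sep; have [/= sX _ _ _] := sep.
have [clX clX' rX] := contract1_2separation_rk hM h3 (hxE i) rx sep.
have [cX | cX'] : 2 <= #|X :&: L| \/ 2 <= #|((E :\ x i) :\: X) :&: L|.
  by have := card_line_split sX; lia.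
- exact: contract_x_2separation_line_side_false sX clX clX' rX cX.
- apply: (contract_x_2separation_line_side_false (subsetDl (E :\ x i) X));
    by rewrite ?setDDK // addnC.
Qed.

Definition relabel i j e := if e == x i then y j else e.

Lemma relabel_imset_notin i j U : x i \notin U -> relabel i j @: U = U.
Proof.
move=> xU; rewrite -[RHS]imset_id; apply: eq_in_imset => e eU; rewrite /relabel.
by case: eqP eU xU => // -> ->.
Qed.

Lemma relabel_imset_in i j U : x i \in U -> relabel i j @: U = y j |: (U :\ x i).
Proof.
move=> xU; rewrite -{1}(setD1K xU) imsetU1 relabel_imset_notin ?setD11 //.
by rewrite /relabel eqxx.
Qed.

Lemma relabel_A i j e : j != i -> e \in A -> relabel i j e \in (E :\ x i) :\ y i.
Proof.
move=> ji; rewrite /relabel !inE => /andP [eL eE]; case: (eqVneq e (x i)) => [_|ex].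
  by rewrite (inj_eq hyi) ji hyE line_neq_x.
by rewrite ex eE !andbT; apply: contraNneq _ eL => ->; apply: mem_line.
Qed.

Lemma relabel_inj i j : {in A &, injective (relabel i j)}.
Proof.
have yA k e : e \in A -> y k != e.
  by rewrite inE => /andP [eL _]; apply: contraNneq _ eL => <-; apply: mem_line.
move=> e f eA fA; rewrite /relabel.
case: (eqVneq e (x i)) => [-> | _]; case: (eqVneq f (x i)) => [-> | _] //.
  by move/eqP; rewrite (negbTE (yA _ _ fA)).
by move/esym/eqP; rewrite (negbTE (yA _ _ eA)).
Qed.

Lemma rk_relabel i j U : j != i -> U \subset A ->
  r (x i |: (y i |: relabel i j @: U)) = r (U :|: L).
Proof.
move=> ji sU; have ij : i != j by rewrite eq_sym.
have yij : 2 <= #|[set y i; y j] :&: L|.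
  apply/card_gt1P; exists (y i), (y j).
  by rewrite !inE !eqxx !mem_line (inj_eq hyi) ij !orbT.
case: (boolP (x i \in U)) => xU.
  rewrite relabel_imset_in // -[in RHS](setD1K xU) -setUA -(rk_setU_line (B := _ |: _)).
    by rewrite -!setUA !setU1_line.
  apply: leq_trans yij (subset_leq_card (setSI _ _)).
  by rewrite !subUset !sub1set !inE !eqxx !orbT.
have sUx : U \subset A :\ x i by rewrite subsetD1 sU.
have sH : y i |: U \subset H i.
  by rewrite subUset sub1set mem_hyper_y (subset_trans sUx (sub_A_hyper i)).
have -> : U :|: L = (y j |: (y i |: U)) :|: L by rewrite -!setUA !setU1_line.
rewrite relabel_imset_notin // (rk_setU1_hyper sH (mem_C_x i)) rk_setU_line.
  by rewrite (rk_setU1_hyper sH (mem_C_y ji)).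
apply: leq_trans yij (subset_leq_card (setSI _ _)).
by rewrite !subUset !sub1set !inE !eqxx !orbT.
Qed.

Lemma relabel_imset_sub i j U : j != i -> U \subset A -> relabel i j @: U \subset E :\ x i.
Proof.
move=> ji sU; apply/subsetP => _ /imsetP [e eU ->].
exact: subsetP (subD1set _ _) _ (relabel_A ji (subsetP sU e eU)).
Qed.

Lemma relabel_notin i j U e : j != i -> U \subset A -> e \in A -> e \notin U ->
  relabel i j e \notin y i |: relabel i j @: U.
Proof.
move=> ji sU eA eU; have /setD1P [ey _] := relabel_A ji eA.
rewrite in_setU1 negb_or ey /=; apply/imsetP => -[u uU /relabel_inj eu].
by move: eU; rewrite eu ?uU // (subsetP sU).
Qed.

Lemma has_minor_contract_x i (T' : finType) (N : pmat T') :
  has_minor (si (contract M L)) N -> has_minor (contract M [set x i]) N.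
Proof.
case=> C [D [sC _ _ iso]].
set P := si (contract M L) in sC iso; set Q := delete (contract P C) D in iso.
have PA : gr P \subset A := subsetDl _ _.
have CA : C \subset A := subset_trans sC PA.
have QP : gr Q \subset gr P by apply: subset_trans (subsetDl _ _) (subsetDl _ _).
have QA : gr Q \subset A := subset_trans QP PA.
have QC g : g \in gr Q -> g \notin C by rewrite !inE => /and3P [].
have rkP Z : Z \subset gr P -> rk P Z = r (Z :|: L) - r L.
  by move=> sZ; rewrite rk_delete // rk_contract ?line_sub ?(subset_trans sZ PA).
have [j [_ [ji _ _]]] := two_other_ords i hn.
have sC2 : y i |: relabel i j @: C \subset E :\ x i.
  by rewrite subUset relabel_imset_sub // sub1set !inE hyE line_neq_x.
apply: (has_minor_of_embedding (M := contract M [set x i]) (g := relabel i j) iso sC2).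
- by move=> a b aQ bQ; apply: relabel_inj; apply: (subsetP QA).
- apply/subsetP => _ /imsetP [g gQ ->]; have gA := subsetP QA g gQ.
  rewrite in_setD (relabel_notin ji CA gA (QC g gQ)) /=.
  exact: subsetP (subD1set _ _) _ (relabel_A ji gA).
move=> Y sY; have YA : Y \subset A := subset_trans sY QA.
have sYC : Y :|: C \subset gr P by rewrite subUset sC (subset_trans sY QP).
have sxi : [set x i] \subset E by rewrite sub1set hxE.
have sYC2 : relabel i j @: Y :|: (y i |: relabel i j @: C) \subset E :\ x i.
  by rewrite subUset sC2 relabel_imset_sub.
rewrite rk_delete // (rk_contract sC (subset_trans sY (subsetDl _ _))) !rkP //.
rewrite !(rk_contract sxi) // !(setUC _ [set x i]) [X in x i |: X]setUCA -imsetU.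
rewrite !rk_relabel ?subUset ?CA ?YA // rk_point ?hxE //.
have := rk_mono hM (subsetUr C L); have := rk_mono hM (setSU L (subsetUr Y C)).
by move: hL2; clear; lia.
Qed.

End Carambole.

Theorem proposition4p6 (T T' : finType) (M : pmat T) (N : pmat T')
    (n : nat) (x y : 'I_n -> T) :
  is_matroid M -> is_matroid N ->
  three_connected M -> simple M ->
  three_connected N -> simple N ->
  has_minor M N ->
  4 <= rk M (gr M) ->
  carambole M N x y ->
  indep M (hull x) /\ (forall e, e \in hull x -> N_contractible M N e).
Proof.
move=> hM _ h3 hs _ _ _ hr4 [hn [hE hyi] hL2 [_ hmin] hcoc].
have hxE i : x i \in gr M by case: (hE i).
have hyE i : y i \in gr M by case: (hE i).
split; first exact: (indep_hull hM h3 hr4 hn hxE hyi hL2 hcoc).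
move=> _ /imsetP [i _ ->]; split.
  exact: (contract_x_three_connected hM h3 hs hr4 hn hxE hyE hyi hL2 hcoc).
exact: (has_minor_contract_x hM h3 hs hr4 hn hxE hyE hyi hL2 hcoc i hmin).
Qed.
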